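(* Let $P$ be the transition matrix of an irreducible classical Markov chain on a countable state space $\Lambda$, and consider the associated OQRW with $\mathcal H=\mathbb C$, $\mathcal K=\ell^2(\Lambda)$, $B^i_j=\sqrt{P(j,i)}U^i_j$ ($|U^i_j|=1$). Then for every faithful initial probability measure $\rho^{(0)}$ (i.e. $\rho^{(0)}_i>0$ for all $i\in\Lambda$), the QMC $(\rho^{(0)},(\mathcal E^{(n)})_{n\ge0})$ associated with this OQRW is irreducible.
   Context: A stochastic matrix $P$ has nonnegative entries with $\sum_jP(i,j)=1$. $i\to j$ means $P^n(i,j)>0$ for some $n\in\mathbb N$; the chain is irreducible if $i\to j$ and $j\to i$ for all $i,j\in\Lambda$. States of $\mathcal B$ are probability measures $\rho=(\rho_i)$ identified with $\sum_i\rho_i|i\rangle\langle i|$. The OQRW: $\mathcal M(\rho)=\sum_i(\sum_jB^i_j\rho_j\overline{B^i_j})|i\rangle\langle i|$, $\rho^{(n)}=\mathcal M^n(\rho^{(0)})$, $\Lambda(\rho^{(n)})=\{i:\rho^{(n)}_i\ne0\}$, $M^i_j=B^i_j|i\rangle\langle j|$. $\mathcal B$ is the commutative algebra of bounded diagonal operators on $\ell^2(\Lambda)$, $\mathcal A=\bigotimes_{k\in\mathbb Z_+}\mathcal B$. Transition expectations: $\mathcal E^{(n)}(x\otimes y)=\sum_{j\in\Lambda(\rho^{(n)})}\sum_i\frac{\mathrm{Tr}((\rho^{(n)}_j|j\rangle\langle j|)x)}{\rho^{(n)}_j}{M^i_j}^*yM^i_j$. $\bar b(n)$ is the strong limit as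 $k\to\infty$ of $\mathcal E^{(n)}(I\otimes\cdots\otimes\mathcal E^{(n+k)}(I\otimes I))$; $E_{0]}(a_0\otimes\cdots\otimes a_n\otimes I\otimes\cdots)=\mathcal E^{(0)}(a_0\otimes\cdots\otimes\mathcal E^{(n)}(a_n\otimes\bar b(n+1)))$, extended to $\mathcal A$ by limits. The QMC is reducible if there exist a projection $p\in\mathcal B$, $p\ne0,I$, and $n_0$ with $E_{0]}(p_{[n_0}ap_{[n_0})=E_{0]}(a)$ for all $a\in\mathcal A$, where $p_{[n}=I\otimes\cdots\otimes I\otimes p\otimes p\otimes\cdots$ ($p$ from the $n$-th position on); otherwise irreducible. *)

From Stdlib Require Import Reals Lra Lia Classical ClassicalEpsilon.
Open Scope R_scope.

Definition Cx : Type := (R * R)%type.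
Definition C0 : Cx := (0, 0).
Definition C1 : Cx := (1, 0).
Definition RtoC (r : R) : Cx := (r, 0).
Definition Cre (z : Cx) : R := fst z.
Definition Cim (z : Cx) : R := snd z.
Definition Cadd (z w : Cx) : Cx := (fst z + fst w, snd z + snd w).
Definition Csub (z w : Cx) : Cx := (fst z - fst w, snd z - snd w).
Definition Cmul (z w : Cx) : Cx :=
  (fst z * fst w - snd z * snd w, fst z * snd w + snd z * fst w).
Definition Cconj (z : Cx) : Cx := (fst z, - snd z).
Definition Cscale (r : R) (z : Cx) : Cx := (r * fst z, r * snd z).
Definition Cnorm2 (z : Cx) : R := fst z * fst z + snd z * snd z.

(* Value of a (convergent) series; 0 by convention if it diverges.    *)
Definition lsum (f : nat -> R) : R :=
  match excluded_middle_informative (exists l, infinite_sum f l) with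
  | left H => proj1_sig (constructive_indefinite_description _ H)
  | right _ => 0
  end.

Section OQRW.

(* The countable state space Lambda is {i : nat | L i = true}. *)
Variable L : nat -> bool.

Definition sumL (f : nat -> R) : R := lsum (fun j => if L j then f j else 0).
Definition sumLC (f : nat -> Cx) : Cx :=
  (sumL (fun j => fst (f j)), sumL (fun j => snd (f j))).

Definition stochastic (P : nat -> nat -> R) : Prop :=
  forall i, L i = true ->
    (forall j, L j = true -> 0 <= P i j) /\
    infinite_sum (fun j => if L j then P i j else 0) 1.

Fixpoint Ppow (P : nat -> nat -> R) (n : nat) (i j : nat) : R :=
  match n with
  | O => if Nat.eqb i j then 1 else 0
  | S m => sumL (fun k => Ppow P m i k * P k j)
  end.

Definition leads_to (P : nat -> nat -> R) (i j : nat) : Prop :=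
  exists n : nat, Ppow P n i j > 0.

Definition irreducible_chain (P : nat -> nat -> R) : Prop :=
  forall i j, L i = true -> L j = true -> leads_to P i j /\ leads_to P j i.

Definition faithful_prob (rho : nat -> R) : Prop :=
  (forall i, L i = true -> rho i > 0) /\
  infinite_sum (fun i => if L i then rho i else 0) 1.

(* ---- the algebra B of bounded diagonal operators on l^2(Lambda) ---- *)
(* an element of B is given by its diagonal entries (only entries in   *)
(* Lambda are meaningful).                                             *)
Definition Bel : Type := nat -> Cx.
Definition Bone : Bel := fun _ => C1.
Definition Bzero : Bel := fun _ => C0.
Definition Bmul (x y : Bel) : Bel := fun j => Cmul (x j) (y j).
Definition Beq (x y : Bel) : Prop := forall j, L j = true -> x j = y j.
Definition bounded (x : Bel) : Prop :=
  exists M, forall j, L j = true -> Cnorm2 (x j) <= M.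
Definition is_projection (p : Bel) : Prop :=
  forall j, L j = true -> Cmul (p j) (p j) = p j /\ Cconj (p j) = p j.

Definition l2 (v : nat -> Cx) : Prop :=
  exists s, infinite_sum (fun j => if L j then Cnorm2 (v j) else 0) s.

Definition sconv (D : nat -> Bel) (Dinf : Bel) : Prop :=
  bounded Dinf /\ (forall N, bounded (D N)) /\
  forall v, l2 v ->
    Un_cv (fun N => sumL (fun j => Cnorm2 (Csub (D N j) (Dinf j)) * Cnorm2 (v j))) 0.

(* the strong limit (chosen; Bzero by convention if it does not exist) *)
Definition slim (D : nat -> Bel) : Bel :=
  match excluded_middle_informative (exists Dinf, sconv D Dinf) with
  | left H => proj1_sig (constructive_indefinite_description _ H)
  | right _ => Bzero
  end.

Variable P : nat -> nat -> R.
Variable U : nat -> nat -> Cx.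
Variable rho0 : nat -> R.

Definition Bop (i j : nat) : Cx := Cscale (sqrt (P j i)) (U i j).

Definition Mop (rho : nat -> R) : nat -> R :=
  fun i => sumL (fun j => Cre (Cmul (Cmul (Bop i j) (RtoC (rho j))) (Cconj (Bop i j)))).

Definition rhon (n : nat) : nat -> R := Nat.iter n Mop rho0.

(* Transition expectation E^(n)(x (x) y): diagonal entry at j equals
   [j in Lambda(rho^(n))] * Tr((rho_j |j><j|) x)/rho_j * (sum_i M^i_j^* y M^i_j)_{jj},
   where Tr((rho_j|j><j|)x) = rho_j x_j and
   (M^i_j)^* y M^i_j = conj(B^i_j) y_i B^i_j |j><j|. *)
Definition Etr (n : nat) (x y : Bel) : Bel := fun j =>
  if Req_EM_T (rhon n j) 0 then C0
  else Cmul (Cscale (/ rhon n j) (Cscale (rhon n j) (x j)))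
            (sumLC (fun i => Cmul (Cconj (Bop i j)) (Cmul (y i) (Bop i j)))).

Fixpoint chain (a : nat -> Bel) (m r : nat) (t : Bel) : Bel :=
  match r with
  | O => Etr m (a m) t
  | S r' => Etr m (a m) (chain a (S m) r' t)
  end.

Definition bbar (n : nat) : Bel := slim (fun k => chain (fun _ => Bone) n k Bone).

Definition E0 (a : nat -> Bel) (n : nat) : Bel := chain a 0 n (bbar (S n)).

Definition ext (a : nat -> Bel) (n : nat) : nat -> Bel :=
  fun k => if Nat.leb k n then a k else Bone.

Definition cut (p : Bel) (n0 : nat) (c : nat -> Bel) : nat -> Bel :=
  fun k => if Nat.ltb k n0 then c k else Bmul p (Bmul (c k) p).

(* Reducibility of the QMC (rho^(0), (E^(n))_n): there are a projection
   p <> 0, I in B and n0 such that E_{0]}(p_[n0 a p_[n0) = E_{0]}(a) for all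
   a, where E_{0]}(p_[n0 a p_[n0) is the strong limit of E_{0]} applied to
   the truncations to the first N+1 factors. *)
Definition QMC_reducible : Prop :=
  exists (p : Bel) (n0 : nat),
    is_projection p /\ ~ Beq p Bzero /\ ~ Beq p Bone /\
    forall (n : nat) (a : nat -> Bel),
      (forall k, (k <= n)%nat -> bounded (a k)) ->
      sconv (fun N => E0 (cut p n0 (ext a n)) N) (E0 (ext a n) n).

Definition QMC_irreducible : Prop := ~ QMC_reducible.

End OQRW.

From Stdlib Require Import Reals Lra Lia Classical ClassicalEpsilon FunctionalExtensionality.
Open Scope R_scope.

(* A diagonal projection p <> 0, I has p_l = 0 at some state l and p_k = 1 at
   another state k. Irreducibility gives a cycle l -> k -> l; going around it
   n0 times yields a path x_0 = l, ..., x_n = l with n >= n0 along which every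
   transition probability is positive. Every state has a predecessor, so all
   rho^(n) stay faithful; then bbar(n) = I, and E_{0]} of the tensor
   |x_0><x_0| (x) ... (x) |x_n><x_n| is, at x_0, the product of the transition
   probabilities along the path, hence nonzero. Conjugating by p_[n0 replaces
   the factor at position n >= n0 by p |l><l| p = 0, which kills it. *)

Lemma lsum_eq_of_infinite_sum f l : infinite_sum f l -> lsum f = l.
Proof.
  intro H. unfold lsum. destruct excluded_middle_informative as [e|n].
  - destruct (constructive_indefinite_description _ e) as [l' Hl']; simpl.
    exact (uniqueness_sum _ _ _ Hl' H).
  - exfalso; apply n; eauto.
Qed.

Lemma sum_f_R0_single_support g j : (forall i, i <> j -> g i = 0) ->
  forall N, sum_f_R0 g N = if Nat.ltb N j then 0 else g j.
Proof.
  intros Hg N; induction N as [|N IH]; simpl.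
  - destruct (Nat.ltb_spec 0 j).
    + apply Hg; lia.
    + assert (j = 0%nat) by lia; subst; reflexivity.
  - rewrite IH. destruct (Nat.ltb_spec N j), (Nat.ltb_spec (S N) j).
    + rewrite (Hg (S N)) by lia; ring.
    + assert (j = S N) by lia; subst; ring.
    + lia.
    + rewrite (Hg (S N)) by lia; ring.
Qed.

Lemma infinite_sum_single_support g j :
  (forall i, i <> j -> g i = 0) -> infinite_sum g (g j).
Proof.
  intros Hg eps He. exists j. intros n Hn. rewrite (sum_f_R0_single_support g j Hg).
  destruct (Nat.ltb_spec n j); [lia|]. unfold Rdist. rewrite Rminus_diag, Rabs_R0. lra.
Qed.

Lemma lsum_single_support g j : (forall i, i <> j -> g i = 0) -> lsum g = g j.
Proof. intro H; apply lsum_eq_of_infinite_sum, infinite_sum_single_support, H. Qed.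

Lemma infinite_sum_zero : infinite_sum (fun _ => 0) 0.
Proof. exact (infinite_sum_single_support (fun _ => 0) 0 (fun _ _ => eq_refl)). Qed.

Lemma partial_sum_le_infinite_sum f l : (forall n, 0 <= f n) -> infinite_sum f l ->
  forall N, sum_f_R0 f N <= l.
Proof.
  intros Hf Hl N. apply (growing_ineq (sum_f_R0 f)); auto.
  intro n; simpl. specialize (Hf (S n)); lra.
Qed.

Lemma term_le_infinite_sum f l : (forall n, 0 <= f n) -> infinite_sum f l ->
  forall n, f n <= l.
Proof.
  intros Hf Hl n. apply Rle_trans with (sum_f_R0 f n).
  - destruct n as [|n]; simpl; [lra|]. pose proof (cond_pos_sum f n Hf). lra.
  - apply partial_sum_le_infinite_sum; auto.
Qed.

Lemma infinite_sum_plus a b la lb : infinite_sum a la -> infinite_sum b lb ->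
  infinite_sum (fun j => a j + b j) (la + lb).
Proof.
  intros Ha Hb eps He. destruct (CV_plus _ _ _ _ Ha Hb eps He) as [N HN].
  exists N. intros n Hn. rewrite sum_plus. apply HN; auto.
Qed.

Lemma infinite_sum_finite_sum (h : nat -> nat -> R) (l : nat -> R) :
  (forall i, infinite_sum (h i) (l i)) ->
  forall N, infinite_sum (fun j => sum_f_R0 (fun i => h i j) N) (sum_f_R0 l N).
Proof.
  intros H N; induction N as [|N IH]; simpl; [apply H | apply infinite_sum_plus; auto].
Qed.

Lemma infinite_sum_le a b la lb : (forall n, a n <= b n) ->
  infinite_sum a la -> infinite_sum b lb -> la <= lb.
Proof.
  intros H Ha Hb. apply (@Rle_cv_lim (sum_f_R0 a) (sum_f_R0 b)); auto.
  intro n; apply sum_Rle; auto.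
Qed.

Lemma infinite_sum_of_bounded_partial_sums f B : (forall n, 0 <= f n) ->
  (forall N, sum_f_R0 f N <= B) -> exists l, infinite_sum f l.
Proof.
  intros Hf HB. destruct (growing_cv (sum_f_R0 f)) as [l Hl].
  - intro n; simpl. specialize (Hf (S n)); lra.
  - exists B. intros x [i ->]. apply HB.
  - exists l; exact Hl.
Qed.

Lemma infinite_sum_comparison a b lb : (forall n, 0 <= a n <= b n) ->
  infinite_sum b lb -> exists l, infinite_sum a l.
Proof.
  intros H Hb. destruct (Rseries_CV_comp a b H) as [l Hl]; [exists lb; exact Hb|].
  exists l; exact Hl.
Qed.

Lemma Cmul0l z : Cmul C0 z = C0.
Proof. destruct z; unfold Cmul, C0; simpl; f_equal; ring. Qed.
Lemma Cmul0r z : Cmul z C0 = C0.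
Proof. destruct z; unfold Cmul, C0; simpl; f_equal; ring. Qed.
Lemma Cmul1l z : Cmul C1 z = z.
Proof. destruct z; unfold Cmul, C1; simpl; f_equal; ring. Qed.
Lemma Cscale0 r : Cscale r C0 = C0.
Proof. unfold Cscale, C0; simpl; f_equal; ring. Qed.
Lemma Cscale1 z : Cscale 1 z = z.
Proof. destruct z; unfold Cscale; simpl; f_equal; ring. Qed.
Lemma Cscale_comp a b z : Cscale a (Cscale b z) = Cscale (a * b) z.
Proof. destruct z; unfold Cscale; simpl; f_equal; ring. Qed.
Lemma Cnorm2_C0 : Cnorm2 C0 = 0.
Proof. unfold Cnorm2, C0; simpl; ring. Qed.
Lemma Cnorm2_C1 : Cnorm2 C1 = 1.
Proof. unfold Cnorm2, C1; simpl; ring. Qed.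
Lemma Cnorm2_ge0 z : 0 <= Cnorm2 z.
Proof. destruct z as [a b]; unfold Cnorm2; simpl; nra. Qed.
Lemma Cnorm2_eq0 z : Cnorm2 z = 0 -> z = C0.
Proof.
  destruct z as [a b]; unfold Cnorm2, C0; simpl; intro H.
  assert (a = 0) by nra; assert (b = 0) by nra; subst; reflexivity.
Qed.
Lemma C1_neq_C0 : C1 <> C0.
Proof. unfold C1, C0; intro H; injection H; lra. Qed.

Section OpenQuantumRandomWalk.

Variable L : nat -> bool.

Lemma sumL_ext f g : (forall j, L j = true -> f j = g j) -> sumL L f = sumL L g.
Proof.
  intro H. unfold sumL. f_equal. apply functional_extensionality; intro j.
  destruct (L j) eqn:E; auto.
Qed.

Lemma sumL_single f j : L j = true -> (forall i, L i = true -> i <> j -> f i = 0) ->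
  sumL L f = f j.
Proof.
  intros Hj H. unfold sumL. rewrite (lsum_single_support _ j).
  - rewrite Hj; reflexivity.
  - intros i Hi. destruct (L i) eqn:E; auto.
Qed.

Lemma sumL_zero f : (forall j, L j = true -> f j = 0) -> sumL L f = 0.
Proof.
  intro H. rewrite (sumL_ext f (fun _ => 0)) by exact H. unfold sumL.
  rewrite (lsum_single_support _ 0); [destruct (L 0); reflexivity|].
  intros i _; destruct (L i); reflexivity.
Qed.

Lemma sumLC_ext f g : (forall j, L j = true -> f j = g j) -> sumLC L f = sumLC L g.
Proof. intro H. unfold sumLC. f_equal; apply sumL_ext; intros j Hj; rewrite H; auto. Qed.

Lemma sumLC_single f j : L j = true -> (forall i, L i = true -> i <> j -> f i = C0) ->
  sumLC L f = f j.
Proof.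
  intros Hj H. unfold sumLC.
  rewrite (sumL_single _ j Hj), (sumL_single (fun i => snd (f i)) j Hj).
  - destruct (f j); reflexivity.
  - intros i Hi Hne; rewrite H; auto.
  - intros i Hi Hne; rewrite H; auto.
Qed.

Lemma projection_entry p j : is_projection L p -> L j = true -> p j = C0 \/ p j = C1.
Proof.
  intros Hp Hj. destruct (Hp j Hj) as [Hm Hc]. destruct (p j) as [a b].
  unfold Cconj in Hc; injection Hc as Hb. assert (b = 0) by lra; subst b.
  unfold Cmul in Hm; simpl in Hm; injection Hm as Ha _.
  assert (Ha' : a * (a - 1) = 0) by lra.
  destruct (Rmult_integral _ _ Ha') as [-> | H1]; [left; reflexivity|].
  right; unfold C1; f_equal; lra.
Qed.

Lemma projection_nontrivial p : is_projection L p ->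
  ~ Beq L p Bzero -> ~ Beq L p Bone ->
  exists k l, L k = true /\ L l = true /\ k <> l /\ p l = C0.
Proof.
  intros Hp Hnz Hno.
  assert (Hk : exists k, L k = true /\ p k = C1).
  { apply NNPP; intro H. apply Hnz. intros j Hj.
    destruct (projection_entry p j Hp Hj); [assumption|]. exfalso; eauto. }
  assert (Hl : exists l, L l = true /\ p l = C0).
  { apply NNPP; intro H. apply Hno. intros j Hj.
    destruct (projection_entry p j Hp Hj); [|assumption]. exfalso; eauto. }
  destruct Hk as [k [Hk Hpk]], Hl as [l [Hl Hpl]].
  exists k, l. repeat split; auto.
  intros ->. apply C1_neq_C0. congruence.
Qed.

Definition basis_proj (y : nat) : Bel := fun i => if Nat.eqb i y then C1 else C0.

Lemma basis_proj_bounded y : bounded L (basis_proj y).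
Proof.
  exists 1. intros j _. unfold basis_proj.
  destruct (Nat.eqb j y); [rewrite Cnorm2_C1 | rewrite Cnorm2_C0]; lra.
Qed.

Lemma sconv_eventually_const D Dinf j K c : sconv L D Dinf -> L j = true ->
  (forall N, (N >= K)%nat -> D N j = c) -> Dinf j = c.
Proof.
  intros [_ [_ Hv]] Hj HD.
  assert (Hout : forall i, i <> j -> basis_proj j i = C0).
  { intros i Hi. unfold basis_proj. apply Nat.eqb_neq in Hi. rewrite Hi; auto. }
  assert (Hl2 : l2 L (basis_proj j)).
  { eexists. apply (infinite_sum_single_support _ j).
    intros i Hi. rewrite Hout, Cnorm2_C0 by auto. destruct (L i); auto. }
  set (q := Cnorm2 (Csub c (Dinf j))).
  assert (Hq : forall N, (N >= K)%nat ->
     sumL L (fun i => Cnorm2 (Csub (D N i) (Dinf i)) * Cnorm2 (basis_proj j i)) = q).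
  { intros N HN. rewrite (sumL_single _ j Hj).
    - rewrite HD by auto. unfold basis_proj. rewrite Nat.eqb_refl, Cnorm2_C1. unfold q; ring.
    - intros i _ Hi. rewrite Hout, Cnorm2_C0 by auto. ring. }
  assert (Hq0 : q = 0).
  { assert (Hge : 0 <= q) by apply Cnorm2_ge0.
    destruct (Rle_lt_or_eq_dec _ _ Hge) as [Hlt|]; [|auto].
    destruct (Hv _ Hl2 q Hlt) as [N HN]. specialize (HN (max N K) (Nat.le_max_l _ _)).
    rewrite (Hq (max N K)) in HN by apply Nat.le_max_r.
    unfold Rdist in HN. rewrite Rminus_0_r, Rabs_right in HN by lra. lra. }
  apply Cnorm2_eq0 in Hq0. destruct c, (Dinf j); unfold Csub, C0 in Hq0.
  injection Hq0; intros; f_equal; lra.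
Qed.

Variable P : nat -> nat -> R.
Hypothesis HP : stochastic L P.

Lemma stochastic_entry_bounds j i : L j = true -> L i = true -> 0 <= P j i <= 1.
Proof.
  intros Hj Hi. destruct (HP j Hj) as [Hn Hs].
  assert (Hnn : forall k, 0 <= (if L k then P j k else 0)).
  { intro k; destruct (L k) eqn:E; [apply Hn; auto | lra]. }
  pose proof (term_le_infinite_sum _ _ Hnn Hs i) as H. simpl in H; rewrite Hi in H.
  split; [apply Hn; auto | exact H].
Qed.

Lemma has_predecessor : irreducible_chain L P ->
  forall k l, L k = true -> L l = true -> k <> l ->
  forall i, L i = true -> exists j, L j = true /\ P j i > 0.
Proof.
  intros Hirr k l Hk Hl Hkl i Hi.
  assert (Hj : exists j, L j = true /\ j <> i).
  { destruct (Nat.eq_dec k i); [exists l | exists k]; split; auto; congruence. }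
  destruct Hj as [j [Hj Hji]].
  destruct (Hirr j i Hj Hi) as [[[|n] Hn] _]; simpl in Hn.
  - apply Nat.eqb_neq in Hji. rewrite Hji in Hn. lra.
  - apply NNPP; intro Hno. rewrite sumL_zero in Hn; [lra|].
    intros m Hm. replace (P m i) with 0; [ring|].
    destruct (Rle_lt_or_eq_dec _ _ (proj1 (HP m Hm) i Hi)); [|auto].
    exfalso; eauto.
Qed.

Definition is_path (n : nat) (x : nat -> nat) : Prop :=
  forall m, (m < n)%nat -> L (x (S m)) = true /\ P (x m) (x (S m)) > 0.

Definition reach (n j l : nat) : Prop :=
  exists x : nat -> nat, x 0%nat = j /\ x n = l /\ is_path n x.

Lemma is_path_in_space n x : L (x 0%nat) = true -> is_path n x ->
  forall m, (m <= n)%nat -> L (x m) = true.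
Proof. intros H0 Hx [|m] Hm; [exact H0 | apply Hx; lia]. Qed.

Lemma Ppow_reach n j l : L l = true -> Ppow L P n j l <> 0 -> reach n j l.
Proof.
  revert l; induction n as [|n IH]; intros l Hl H; simpl in H.
  - destruct (Nat.eqb_spec j l); [subst | lra].
    exists (fun _ => l). repeat split; auto; intros; lia.
  - assert (Hex : exists k, L k = true /\ Ppow L P n j k * P k l <> 0).
    { apply NNPP; intro Hno. apply H, sumL_zero. intros k Hk.
      apply NNPP; intro Hne. eauto. }
    destruct Hex as [k [Hk Hkl]].
    assert (Hpow : Ppow L P n j k <> 0) by (intro E; apply Hkl; rewrite E; ring).
    assert (Hstep : P k l > 0).
    { destruct (Rle_lt_or_eq_dec _ _ (proj1 (HP k Hk) l Hl)) as [|E]; auto.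
      exfalso; apply Hkl; rewrite <- E; ring. }
    destruct (IH k Hk Hpow) as [x [Hx0 [Hxn Hx]]].
    exists (fun m => if Nat.leb m n then x m else l). split; [|split].
    + exact Hx0.
    + destruct (Nat.leb_spec (S n) n); [lia | reflexivity].
    + intros m Hm. destruct (Nat.leb_spec m n), (Nat.leb_spec (S m) n); try lia.
      * apply Hx; lia.
      * assert (m = n) by lia; subst m. rewrite Hxn; auto.
Qed.

Lemma reach_trans a b j k l : reach a j k -> reach b k l -> reach (a + b) j l.
Proof.
  intros [x [Hx0 [Hxa Hx]]] [y [Hy0 [Hyb Hy]]].
  set (z := fun m => if Nat.leb m a then x m else y (m - a)%nat).
  assert (Hz : forall m, (m >= a)%nat -> z m = y (m - a)%nat).
  { intros m Hm. unfold z. destruct (Nat.leb_spec m a); auto.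
    assert (m = a) by lia; subst m. rewrite Nat.sub_diag, Hxa, Hy0; auto. }
  exists z. split; [|split].
  - exact Hx0.
  - rewrite Hz by lia. replace (a + b - a)%nat with b by lia. exact Hyb.
  - intros m Hm. destruct (Nat.leb_spec (S m) a).
    + unfold z. destruct (Nat.leb_spec (S m) a), (Nat.leb_spec m a); try lia.
      apply Hx; lia.
    + rewrite !Hz by lia. replace (S m - a)%nat with (S (m - a)) by lia. apply Hy; lia.
Qed.

Lemma reach_iter c l : reach c l l -> forall t, reach (t * c) l l.
Proof.
  intros H t; induction t as [|t IH].
  - exists (fun _ => l). repeat split; intros; simpl in *; lia.
  - apply (reach_trans c (t * c) l l l H IH).
Qed.

Lemma reach_long_cycle : irreducible_chain L P ->
  forall k l, L k = true -> L l = true -> k <> l ->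
  forall n0, exists n, (n0 <= n)%nat /\ reach n l l.
Proof.
  intros Hirr k l Hk Hl Hkl n0.
  destruct (Hirr l k Hl Hk) as [[n1 Hn1] [n2 Hn2]].
  pose proof (Ppow_reach n1 l k Hk ltac:(lra)) as Rlk.
  pose proof (Ppow_reach n2 k l Hl ltac:(lra)) as Rkl.
  assert (Hn1pos : (1 <= n1)%nat).
  { destruct n1; [|lia]. destruct Rlk as [x [Hx0 [Hx1 _]]]. congruence. }
  exists (n0 * (n1 + n2))%nat. split; [nia|].
  exact (reach_iter _ l (reach_trans _ _ _ _ _ Rlk Rkl) n0).
Qed.

Variable U : nat -> nat -> Cx.
Hypothesis HU : forall i j, L i = true -> L j = true -> Cnorm2 (U i j) = 1.

Lemma Bop_conj_mul i j w : L i = true -> L j = true ->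
  Cmul (Cconj (Bop P U i j)) (Cmul w (Bop P U i j)) = Cscale (P j i) w.
Proof.
  intros Hi Hj. pose proof (proj1 (stochastic_entry_bounds j i Hj Hi)) as HPji.
  pose proof (HU i j Hi Hj) as HUij. pose proof (sqrt_sqrt _ HPji) as Hs.
  unfold Bop, Cnorm2 in *. destruct (U i j) as [u1 u2], w as [w1 w2].
  unfold Cmul, Cconj, Cscale; simpl in *. set (s := sqrt (P j i)) in *.
  replace (P j i) with (s * s * (u1 * u1 + u2 * u2)) by (rewrite HUij, Hs; ring).
  f_equal; ring.
Qed.

Lemma Bop_mul_conj_re i j r : L i = true -> L j = true ->
  Cre (Cmul (Cmul (Bop P U i j) (RtoC r)) (Cconj (Bop P U i j))) = P j i * r.
Proof.
  intros Hi Hj. pose proof (proj1 (stochastic_entry_bounds j i Hj Hi)) as HPji.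
  pose proof (HU i j Hi Hj) as HUij. pose proof (sqrt_sqrt _ HPji) as Hs.
  unfold Bop, Cnorm2 in *. destruct (U i j) as [u1 u2].
  unfold Cmul, Cconj, Cscale, Cre, RtoC; simpl in *. set (s := sqrt (P j i)) in *.
  replace (P j i) with (s * s * (u1 * u1 + u2 * u2)) by (rewrite HUij, Hs; ring).
  ring.
Qed.

Definition Mdual (y : Bel) : Bel := fun j =>
  sumLC L (fun i => Cmul (Cconj (Bop P U i j)) (Cmul (y i) (Bop P U i j))).

Lemma Mdual_unital y j : L j = true -> (forall i, L i = true -> y i = C1) ->
  Mdual y j = C1.
Proof.
  intros Hj Hy. unfold Mdual.
  rewrite (sumLC_ext _ (fun i => Cscale (P j i) C1)).
  - unfold sumLC, Cscale, C1; simpl. f_equal.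
    + rewrite (sumL_ext _ (P j)) by (intros; ring).
      apply lsum_eq_of_infinite_sum, (proj2 (HP j Hj)).
    + apply sumL_zero; intros; ring.
  - intros i Hi. rewrite Hy by auto. apply Bop_conj_mul; auto.
Qed.

Definition faithful_summable (r : nat -> R) : Prop :=
  (forall i, L i = true -> r i > 0) /\
  exists s, infinite_sum (fun i => if L i then r i else 0) s.

Section Faithfulness.

Variable r : nat -> R.
Hypothesis Hr : faithful_summable r.

Lemma Mop_terms_nonneg i : L i = true ->
  forall j, 0 <= (if L j then P j i * r j else 0).
Proof.
  intros Hi j. destruct (L j) eqn:E; [|lra].
  pose proof (stochastic_entry_bounds j i E Hi). pose proof (proj1 Hr j E). nra.
Qed.

Lemma Mop_infinite_sum i : L i = true ->
  infinite_sum (fun j => if L j then P j i * r j else 0) (Mop L P U r i).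
Proof.
  intro Hi. destruct Hr as [Hpos [s Hs]].
  destruct (infinite_sum_comparison (fun j => if L j then P j i * r j else 0)
    (fun j => if L j then r j else 0) s) as [l Hl]; [|exact Hs|].
  - intro j. split; [apply Mop_terms_nonneg; auto|].
    destruct (L j) eqn:E; [|lra].
    pose proof (stochastic_entry_bounds j i E Hi). specialize (Hpos j E). nra.
  - replace (Mop L P U r i) with l; auto.
    unfold Mop, sumL. rewrite <- (lsum_eq_of_infinite_sum _ _ Hl). f_equal.
    apply functional_extensionality; intro j. destruct (L j) eqn:E; auto.
    symmetry; apply Bop_mul_conj_re; auto.
Qed.

Lemma Mop_pos : (forall i, L i = true -> exists j, L j = true /\ P j i > 0) ->
  forall i, L i = true -> Mop L P U r i > 0.
Proof.
  intros Hpred i Hi. destruct (Hpred i Hi) as [j [Hj Hji]].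
  pose proof (term_le_infinite_sum _ _ (Mop_terms_nonneg i Hi) (Mop_infinite_sum i Hi) j)
    as H.
  simpl in H. rewrite Hj in H. pose proof (proj1 Hr j Hj). nra.
Qed.

(* Partial sums of M(r) are bounded by sum r, since the rows of P sum to 1. *)
Lemma Mop_summable :
  exists s, infinite_sum (fun i => if L i then Mop L P U r i else 0) s.
Proof.
  destruct Hr as [Hpos [s Hs]].
  apply (infinite_sum_of_bounded_partial_sums _ s).
  - intro i. destruct (L i) eqn:E; [|lra].
    exact (infinite_sum_le _ _ _ _ (Mop_terms_nonneg i E) infinite_sum_zero
      (Mop_infinite_sum i E)).
  - intro N.
    set (h := fun i j => if L i then (if L j then P j i * r j else 0) else 0).
    assert (Hh : forall i, infinite_sum (h i) (if L i then Mop L P U r i else 0)).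
    { intro i. unfold h. destruct (L i) eqn:E; [apply Mop_infinite_sum; auto|].
      exact infinite_sum_zero. }
    refine (infinite_sum_le _ _ _ _ _ (infinite_sum_finite_sum h _ Hh N) Hs).
    intro j. unfold h. destruct (L j) eqn:E.
    + destruct (HP j E) as [Hn1 Hs1].
      assert (Hnn : forall k, 0 <= (if L k then P j k else 0)).
      { intro k; destruct (L k) eqn:E'; [apply Hn1; auto | lra]. }
      pose proof (partial_sum_le_infinite_sum _ _ Hnn Hs1 N) as Hrow.
      rewrite (sum_eq _ (fun i => (if L i then P j i else 0) * r j))
        by (intros i _; destruct (L i); ring).
      rewrite <- scal_sum. pose proof (Hpos j E). nra.
    + rewrite (sum_eq _ (fun _ => 0)) by (intros i _; destruct (L i); auto).
      rewrite sum_cte. lra.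
Qed.

End Faithfulness.

Variable rho0 : nat -> R.

Lemma rhon_faithful :
  (forall i, L i = true -> exists j, L j = true /\ P j i > 0) ->
  faithful_prob L rho0 -> forall n, faithful_summable (rhon L P U rho0 n).
Proof.
  intros Hpred [Hpos Hsum] n. induction n as [|n IH]; [split; eauto|].
  split; [apply Mop_pos | apply Mop_summable]; auto.
Qed.

Lemma Etr_zero_left n x y j : x j = C0 -> Etr L P U rho0 n x y j = C0.
Proof.
  intro H. unfold Etr. destruct Req_EM_T; auto. rewrite H, !Cscale0, Cmul0l; auto.
Qed.

Lemma Etr_zero_right n x y j : (forall i, L i = true -> y i = C0) ->
  Etr L P U rho0 n x y j = C0.
Proof.
  intro H. unfold Etr. destruct Req_EM_T; auto.
  replace (sumLC L _) with C0; [apply Cmul0r|].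
  unfold sumLC, C0. f_equal; symmetry; apply sumL_zero; intros i Hi;
    rewrite H, Cmul0l, Cmul0r; auto.
Qed.

Lemma chain_vanishes c k t : (forall i, c k i = C0) ->
  forall r m, (m <= k <= m + r)%nat -> forall i, chain L P U rho0 c m r t i = C0.
Proof.
  intros Hc r; induction r as [|r IH]; intros m Hm i; simpl.
  - assert (k = m) by lia; subst. apply Etr_zero_left; auto.
  - destruct (Nat.eq_dec k m) as [->|].
    + apply Etr_zero_left; auto.
    + apply Etr_zero_right. intros i' _. apply IH. lia.
Qed.

Section FaithfulStates.

Hypothesis Hrhon : forall n i, L i = true -> rhon L P U rho0 n i > 0.

Lemma Etr_eq n x y j : L j = true -> Etr L P U rho0 n x y j = Cmul (x j) (Mdual y j).
Proof.
  intro Hj. pose proof (Hrhon n j Hj). unfold Etr. destruct Req_EM_T; [lra|].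
  f_equal. destruct (x j) as [a b]; unfold Cscale; simpl. f_equal; field; lra.
Qed.

Lemma chain_units k m i : L i = true ->
  chain L P U rho0 (fun _ => Bone) m k Bone i = C1.
Proof.
  revert m i; induction k as [|k IH]; intros m i Hi; simpl;
    rewrite Etr_eq, Cmul1l by auto; apply Mdual_unital; auto.
Qed.

Lemma bbar_unit n i : L i = true -> bbar L P U rho0 n i = C1.
Proof.
  intro Hi. unfold bbar, slim.
  destruct excluded_middle_informative as [e|ne].
  - destruct (constructive_indefinite_description _ e) as [D HD]; simpl.
    apply (sconv_eventually_const _ D i 0 C1 HD Hi). intros; apply chain_units; auto.
  - exfalso; apply ne. exists Bone. split; [|split].
    + exists 1. intros; unfold Bone; rewrite Cnorm2_C1; lra.
    + intro N. exists 1. intros j Hj. rewrite chain_units, Cnorm2_C1 by auto. lra.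
    + intros v _ eps He. exists 0%nat. intros N _.
      rewrite sumL_zero; [unfold Rdist; rewrite Rminus_diag, Rabs_R0; lra|].
      intros j Hj. rewrite chain_units by auto. unfold Bone, Csub, Cnorm2, C1; simpl. ring.
Qed.

(* Along a path, E^(m)(|x_m><x_m| (x) ...) is concentrated at x_m, where it
   picks up the factor P(x_m, x_{m+1}) at each step. *)
Lemma chain_along_path (x : nat -> nat) n A t :
  (forall m, (m <= n)%nat -> L (x m) = true) -> is_path n x ->
  (forall m, (m <= n)%nat -> A m = basis_proj (x m)) ->
  forall r m, (m + r = n)%nat -> exists w, w > 0 /\
    chain L P U rho0 A m r t (x m) = Cscale w (Mdual t (x n)) /\
    forall i, i <> x m -> chain L P U rho0 A m r t i = C0.
Proof.
  intros HL Hx HA r. induction r as [|r IH]; intros m Hm; simpl.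
  - assert (m = n) by lia; subst m. exists 1. split; [lra | split].
    + rewrite Etr_eq by auto. rewrite HA by lia. unfold basis_proj.
      rewrite Nat.eqb_refl, Cmul1l, Cscale1. reflexivity.
    + intros i Hi. apply Etr_zero_left. rewrite HA by lia. unfold basis_proj.
      apply Nat.eqb_neq in Hi. rewrite Hi; auto.
  - destruct (IH (S m)) as [w [Hw [Hv Hz]]]; [lia|].
    assert (HLm : L (x m) = true) by (apply HL; lia).
    destruct (Hx m ltac:(lia)) as [HLS HPm].
    exists (P (x m) (x (S m)) * w). split; [nra | split].
    + rewrite Etr_eq by auto. rewrite HA by lia. unfold basis_proj at 1.
      rewrite Nat.eqb_refl, Cmul1l. unfold Mdual at 1.
      rewrite (sumLC_single _ (x (S m)) HLS).
      * rewrite Hv, Bop_conj_mul by auto. apply Cscale_comp.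
      * intros i _ Hi. rewrite Hz, Cmul0l, Cmul0r by auto. reflexivity.
    + intros i Hi. apply Etr_zero_left. rewrite HA by lia. unfold basis_proj.
      apply Nat.eqb_neq in Hi. rewrite Hi; auto.
Qed.

Lemma E0_along_path_nonzero (x : nat -> nat) n :
  L (x 0%nat) = true -> is_path n x ->
  E0 L P U rho0 (ext (fun m => basis_proj (x m)) n) n (x 0%nat) <> C0.
Proof.
  intros H0 Hx. pose proof (is_path_in_space n x H0 Hx) as HL.
  destruct (chain_along_path x n (ext (fun m => basis_proj (x m)) n)
    (bbar L P U rho0 (S n)) HL Hx) with n 0%nat as [w [Hw [Hv _]]]; [|lia|].
  - intros m Hm. unfold ext. destruct (Nat.leb_spec m n); [reflexivity | lia].
  - unfold E0. rewrite Hv, Mdual_unital by (auto; intros; apply bbar_unit; auto).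
    unfold Cscale, C1, C0; simpl. intro E; injection E; intros; lra.
Qed.

End FaithfulStates.

Lemma E0_cut_vanishes p n0 (a : nat -> Bel) n j : (n0 <= n)%nat ->
  (forall i, Cmul (p i) (Cmul (a n i) (p i)) = C0) ->
  forall N, (N >= n)%nat -> E0 L P U rho0 (cut p n0 (ext a n)) N j = C0.
Proof.
  intros Hn Ha N HN. apply (chain_vanishes _ n); [|lia].
  intro i. unfold cut, ext, Bmul.
  destruct (Nat.ltb_spec n n0); [lia|]. rewrite Nat.leb_refl. apply Ha.
Qed.

End OpenQuantumRandomWalk.

Theorem mainTheorem14 (L : nat -> bool) (P : nat -> nat -> R) (U : nat -> nat -> Cx)
  (rho0 : nat -> R)
  (HP : stochastic L P) (Hirr : irreducible_chain L P)
  (HU : forall i j, L i = true -> L j = true -> Cnorm2 (U i j) = 1)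
  (Hrho : faithful_prob L rho0) :
  QMC_irreducible L P U rho0.
Proof.
  intros [p [n0 [Hproj [Hnz [Hno Hconv]]]]].
  destruct (projection_nontrivial L p Hproj Hnz Hno) as [k [l [Hk [Hl [Hkl Hpl]]]]].
  assert (Hrhon : forall n i, L i = true -> rhon L P U rho0 n i > 0).
  { intro n. exact (proj1 (rhon_faithful L P HP U HU rho0
      (has_predecessor L P HP Hirr k l Hk Hl Hkl) Hrho n)). }
  destruct (reach_long_cycle L P HP Hirr k l Hk Hl Hkl n0)
    as [n [Hn [x [Hx0 [Hxn Hx]]]]].
  set (a := fun m => basis_proj (x m)).
  apply (E0_along_path_nonzero L P HP U HU rho0 Hrhon x n); [rewrite Hx0; exact Hl | exact Hx |].
  apply (sconv_eventually_const L _ _ (x 0%nat) n C0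
    (Hconv n a (fun m _ => basis_proj_bounded L (x m)))); [rewrite Hx0; exact Hl|].
  apply E0_cut_vanishes; [exact Hn|]. intro i. unfold a, basis_proj. rewrite Hxn.
  destruct (Nat.eqb_spec i l) as [->|]; [rewrite Hpl | ]; rewrite ?Cmul0l, ?Cmul0r; reflexivity.
Qed.
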